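(* Let $\lambda^*(q,K,C)$ denote the critical virality weight for story precision $q\in(1/2,1)$, news-feed size $K$, and capacity $C$ (considering only admissible triples, with integers $1\le C\le K/2$). Then: (i) $\lambda^*(q',K,C)\ge\lambda^*(q,K,C)$ if $q'>q$; (ii) $\lambda^*(q,K,C')\ge\lambda^*(q,K,C)$ if $C'<C$; (iii) $\lambda^*(q,K-2,C)\ge\lambda^*(q,K,C)$ for every $K$; (iv) $\lambda^*(q,K+1,C)\ge\lambda^*(q,K,C)$ if $K$ is odd; (v) $\lambda^*(q,K-1,C)\ge\lambda^*(q,K,C)$ if $K$ is odd. All of these inequalities are strict whenever $\lambda^*(q,K,C)$ is finite.
   Context: For parameters $q\in(1/2,1)$, integers $K\ge1$, $1\le C\le K/2$, and $\lambda\in[0,1]$, let $P_k(x,\lambda)=\mathbb{P}[\mathrm{Binom}(K,\lambda x+(1-\lambda)q)=k]$ for $x\in[0,1]$, and define the majority-rule inflow accuracy function $$\phi_{\sigma^{\mathrm{maj}}}(x)=\frac{q+C\sum_{k>K/2}P_k(x,\lambda)+qC\,P_{K/2}(x,\lambda)}{1+C},$$ where the term $P_{K/2}$ is present only when $K$ is even. (This is the expected fraction of new popularity score going to correct stories when agents, who share $C$ feed stories and post their own story of precision $q$, use the majority rule: share $C$ stories of the feed majority, breaking ties in favor of the own story.) The critical virality weight is $\lambda^*(q,K,C)=\inf\{\lambda\in[0,1]:\phi_{\sigma^{\mathrm{maj}}}(x)=x\text{ for some }x\in[0,1/2]\}$, with $\lambda^*=\infty$ if this set is empty. *)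

From HB Require Import structures.
From mathcomp Require Import all_boot all_order all_algebra.
From mathcomp Require Import all_classical all_reals ereal.
Set Implicit Arguments. Unset Strict Implicit. Unset Printing Implicit Defensive.
Import Order.TTheory GRing.Theory Num.Theory.
Local Open Scope classical_set_scope.
Local Open Scope ring_scope.

Section Defs.
Variable R : realType.

Definition binom_prob (K k : nat) (p : R) : R :=
  'C(K, k)%:R * p ^+ k * (1 - p) ^+ (K - k).

Definition Pk (q : R) (K : nat) (lam x : R) (k : nat) : R :=
  binom_prob K k (lam * x + (1 - lam) * q).

Definition phi_maj (q : R) (K C : nat) (lam x : R) : R :=
  (q + C%:R * (\sum_(k < K.+1 | (K < 2 * k)%N) Pk q K lam x k)
     + (if ~~ odd K then q * C%:R * Pk q K lam x K./2 else 0))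
  / (1 + C%:R).

(* critical virality weight; ereal_inf of the empty set is +oo *)
Definition lambda_star (q : R) (K C : nat) : \bar R :=
  ereal_inf [set (lam%:E)%E | lam in
    [set lam : R | 0 <= lam <= 1 /\
       exists x : R, 0 <= x <= 1 / 2 /\ phi_maj q K C lam x = x]].

Definition admissible (q : R) (K C : nat) : Prop :=
  1 / 2 < q < 1 /\ (1 <= C)%N /\ (2 * C <= K)%N.

End Defs.

From HB Require Import structures.
From mathcomp Require Import all_boot all_order all_algebra.
From mathcomp Require Import all_classical all_reals ereal.
From mathcomp Require Import all_analysis.
From mathcomp Require Import ring lra zify.
Import Order.TTheory GRing.Theory Num.Theory Num.Def numFieldNormedType.Exports.
Set Implicit Arguments. Unset Strict Implicit. Unset Printing Implicit Defensive.
Local Open Scope ring_scope.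

(* Write b_n(k) = P[Bin(n, p) = k] and M_K(p) = P[Bin(K, p) > K/2] + q b_K(K/2)
   ([maj_acc]; the tie term only for even K), so that
   phi(x) = (q + C M_K(p)) / (1 + C) with p = lam x + (1 - lam) q.
   Suppose that at every fixed point of a triple B the inflow of a triple A lies
   strictly below the diagonal.  As A's inflow is at least 1/2 at x = 1/2, the
   intermediate value theorem makes every critical weight of B critical for A.
   Moreover the least critical weight of B is attained and positive, and
   slightly below it A's inflow still crosses the diagonal; so
   lambda*(A) < lambda*(B) whenever lambda*(A) is finite.  For (i) this needs
   M_K nondecreasing in p and in q, for (ii) that M_K(p) < x at a fixed point.
   At a fixed point 0 < p < 1/2, and the comparisons in K reduce to
   inequalities between the M_K, which follow from the one-step identities
     M_{2m}   = M_{2m+1} + (q - p) b_{2m}(m),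
     M_{2m+2} = M_{2m+1} + (2q - 1) p b_{2m+1}(m),
     M_{2m+3} = M_{2m+1} - (1 - 2p) p b_{2m+1}(m),
   and from b_{2m+3}(m+1) <= b_{2m+1}(m). *)

Variant parity_spec (K : nat) : bool -> Prop :=
  | Even m of K = m.*2 : parity_spec K false
  | Odd m of K = m.*2.+1 : parity_spec K true.

Lemma parityP K : parity_spec K (odd K).
Proof. by have := odd_double_half K; case: (odd K) => <-; [apply: Odd|apply: Even]. Qed.

Lemma bin_center_le m : ('C(m.*2.+3, m.+1) <= 4 * 'C(m.*2.+1, m))%N.
Proof.
have e1 := mul_bin_diag m.*2.+3 m.
have e2 := mul_bin_down m.*2.+2 m.
rewrite (_ : m.*2.+2 - m = m.+2)%N /= in e2; last by rewrite -addnn; lia.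
have e3 : (m.+2 * 'C(m.*2.+3, m.+1) = (m.*2.+3).*2 * 'C(m.*2.+1, m))%N.
  apply/eqP; rewrite -(eqn_pmul2l (ltn0Sn m)) mulnCA -e1 mulnCA -e2; apply/eqP.
  rewrite -!addnn; nia.
by rewrite -(leq_pmul2l (ltn0Sn m.+1)) e3 -!addnn; nia.
Qed.

Section BinomialTail.
Variable R : realType.
Implicit Types p q : R.

Lemma binom_prob_ge0 n k p : 0 <= p <= 1 -> 0 <= binom_prob n k p.
Proof.
by case/andP=> p0 p1; rewrite /binom_prob !mulr_ge0 ?exprn_ge0 ?subr_ge0.
Qed.

Lemma binom_prob_gt0 n k p : 0 < p < 1 -> (k <= n)%N -> 0 < binom_prob n k p.
Proof.
case/andP=> p0 p1 kn.
by rewrite /binom_prob !mulr_gt0 ?exprn_gt0 ?subr_gt0 // ltr0n bin_gt0.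
Qed.

Lemma binom_prob_small n k p : (n < k)%N -> binom_prob n k p = 0.
Proof. by move=> nk; rewrite /binom_prob bin_small // !mul0r. Qed.

Lemma binom_probS n k p :
  binom_prob n.+1 k.+1 p = (1 - p) * binom_prob n k.+1 p + p * binom_prob n k p.
Proof.
rewrite /binom_prob binS natrD subSS.
have [kn|nk] := leqP k.+1 n.
  by rewrite -(subnSK kn) !exprS; ring.
have [-> ->] : (n - k = 0 /\ n - k.+1 = 0)%N by lia.
by rewrite bin_small // !expr0 exprS; ring.
Qed.

Lemma binom_prob_center m p :
  (1 - p) * binom_prob m.*2.+1 m.+1 p = p * binom_prob m.*2.+1 m p.
Proof.
have em : (m.*2.+1 - m = m.+1)%N by rewrite -addnn; lia.
rewrite /binom_prob -{1}em bin_sub ?em; last by rewrite -addnn; lia.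
rewrite (_ : m.*2.+1 - m.+1 = m)%N; last by rewrite -addnn; lia.
by rewrite !exprS; ring.
Qed.

Lemma binom_prob_center_even m p :
  binom_prob m.*2.+2 m.+1 p = 2 * p * binom_prob m.*2.+1 m p.
Proof. by rewrite binom_probS binom_prob_center; ring. Qed.

Lemma binom_prob_center_decr m p : 0 <= p <= 1 ->
  binom_prob m.*2.+3 m.+1 p <= binom_prob m.*2.+1 m p.
Proof.
case/andP=> p0 p1; rewrite /binom_prob.
rewrite (_ : m.*2.+3 - m.+1 = m.+2)%N; last by rewrite -addnn; lia.
rewrite (_ : m.*2.+1 - m = m.+1)%N; last by rewrite -addnn; lia.
set u := p ^+ m * (1 - p) ^+ m.+1.
have u0 : 0 <= u by rewrite mulr_ge0 ?exprn_ge0 ?subr_ge0.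
have binC : 'C(m.*2.+3, m.+1)%:R <= 4 * 'C(m.*2.+1, m)%:R :> R.
  by rewrite -natrM ler_nat bin_center_le.
rewrite (_ : _ * _ * _ = 'C(m.*2.+3, m.+1)%:R * (p * (1 - p)) * u); last first.
  by rewrite /u !exprS; ring.
rewrite -[X in _ <= X]mulrA -/u ler_wpM2r //.
have : p * (1 - p) <= 1 / 4 by have := sqr_ge0 (2 * p - 1); lra.
have : 0 <= 'C(m.*2.+3, m.+1)%:R :> R by [].
nra.
Qed.

Lemma binom_prob_continuous n k : continuous (@binom_prob R n k).
Proof.
have -> : @binom_prob R n k = horner ('C(n, k)%:R%:P * 'X^k * (1 - 'X) ^+ (n - k)).
  by apply: funext => p; rewrite /binom_prob !hornerE.
exact: continuous_horner.
Qed.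

Definition binom_tail n j p := \sum_(j <= k < n.+1) binom_prob n k p.

Lemma binom_tail_split n j p : binom_tail n j p = binom_prob n j p + binom_tail n j.+1 p.
Proof.
rewrite /binom_tail; have [jn|nj] := leqP j n; first by rewrite big_ltn.
by rewrite !big_geq ?binom_prob_small ?add0r // ltnW.
Qed.

Lemma binom_tail_small n j p : (n < j)%N -> binom_tail n j p = 0.
Proof. by move=> nj; rewrite /binom_tail big_geq. Qed.

Lemma binom_tail0 n p : binom_tail n 0 p = 1.
Proof.
rewrite /binom_tail big_mkord -(expr1n R n) -{1}(subrK p 1) exprDn.
by apply: eq_bigr => k _; rewrite /binom_prob -mulr_natl; ring.
Qed.

Lemma binom_tail_ge0 n j p : 0 <= p <= 1 -> 0 <= binom_tail n j p.
Proof. by move=> p01; rewrite sumr_ge0 // => k _; exact: binom_prob_ge0. Qed.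

Lemma binom_tail_mix n j p :
  binom_tail n.+1 j.+1 p = (1 - p) * binom_tail n j.+1 p + p * binom_tail n j p.
Proof.
have [nj|jn] := ltnP n j.
  by rewrite !binom_tail_small ?mulr0 ?addr0 //; lia.
have -> : binom_tail n j.+1 p = \sum_(j <= k < n.+1) binom_prob n k.+1 p.
  by rewrite /binom_tail big_add1 big_nat_recr //= binom_prob_small ?addr0.
rewrite /binom_tail big_add1 /= !mulr_sumr -big_split.
by apply: eq_bigr => k _; rewrite binom_probS.
Qed.

Lemma binom_tailS n j p : binom_tail n.+1 j.+1 p = binom_tail n j.+1 p + p * binom_prob n j p.
Proof. by rewrite binom_tail_mix (binom_tail_split n j); ring. Qed.

Lemma le_binom_tail n j p p' : 0 <= p -> p <= p' -> p' <= 1 ->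
  binom_tail n j p <= binom_tail n j p'.
Proof.
move=> p0 pp' p'1; elim: n j => [|n IHn] [|j]; rewrite ?binom_tail0 //.
  by rewrite !binom_tail_small.
rewrite !binom_tail_mix.
have tail_decr r : 0 <= r <= 1 -> binom_tail n j.+1 r <= binom_tail n j r.
  by move=> r01; rewrite (binom_tail_split n j r) lerDr binom_prob_ge0.
have := IHn j; have := IHn j.+1; have := tail_decr p'.
have : 0 <= binom_tail n j.+1 p by apply: binom_tail_ge0; lra.
nra.
Qed.

Lemma binom_tail_continuous n j : continuous (binom_tail n j).
Proof.
apply: continuous_big => [|k _]; [exact: add_continuous|exact: binom_prob_continuous].
Qed.

Definition maj_acc K q p :=
  binom_tail K K./2.+1 p + (if ~~ odd K then q * binom_prob K K./2 p else 0).

Lemma maj_acc_odd m q p : maj_acc m.*2.+1 q p = binom_tail m.*2.+1 m.+1 p.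
Proof. by rewrite /maj_acc /= odd_double uphalf_double addr0. Qed.

Lemma maj_acc_even m q p :
  maj_acc m.*2 q p = binom_tail m.*2 m.+1 p + q * binom_prob m.*2 m p.
Proof. by rewrite /maj_acc odd_double doubleK. Qed.

Lemma maj_acc_double m q p :
  maj_acc m.*2 q p = maj_acc m.*2.+1 q p + (q - p) * binom_prob m.*2 m p.
Proof. by rewrite maj_acc_even maj_acc_odd binom_tailS; ring. Qed.

Lemma maj_acc_doubleS m q p :
  maj_acc m.*2.+2 q p = maj_acc m.*2.+1 q p + (2 * q - 1) * p * binom_prob m.*2.+1 m p.
Proof.
rewrite -doubleS maj_acc_even doubleS binom_tailS binom_prob_center_even maj_acc_odd.
rewrite (binom_tail_split _ m.+1); have := binom_prob_center m p; lra.
Qed.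

Lemma maj_acc_oddS m q p :
  maj_acc m.*2.+3 q p = maj_acc m.*2.+1 q p - (1 - 2 * p) * p * binom_prob m.*2.+1 m p.
Proof.
have := maj_acc_double m.+1 q p.
rewrite doubleS maj_acc_doubleS binom_prob_center_even; lra.
Qed.

Lemma maj_acc_odd_half m q : maj_acc m.*2.+1 q (1 / 2) = 1 / 2.
Proof.
elim: m => [|m IHm].
  rewrite maj_acc_odd binom_tail_split binom_tail_small // -[0.*2.+1]/1%N.
  by rewrite /binom_prob binn subnn; field.
by rewrite doubleS maj_acc_oddS IHm; field.
Qed.

Lemma maj_acc_half K q : 1 / 2 <= q -> 1 / 2 <= maj_acc K q (1 / 2).
Proof.
move=> q12; case: (parityP K) => m ->; last by rewrite maj_acc_odd_half.
rewrite maj_acc_double maj_acc_odd_half lerDl mulr_ge0 ?subr_ge0 //.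
by apply: binom_prob_ge0; lra.
Qed.

Lemma maj_acc_ge0 K q p : 0 <= p <= 1 -> 0 <= q -> 0 <= maj_acc K q p.
Proof.
move=> p01 q0; rewrite addr_ge0 ?binom_tail_ge0 //.
by case: ifP => // _; rewrite mulr_ge0 ?binom_prob_ge0.
Qed.

Lemma le_maj_acc K q p p' : 0 <= p -> p <= p' -> p' <= 1 -> 0 <= q <= 1 ->
  maj_acc K q p <= maj_acc K q p'.
Proof.
move=> p0 pp' p'1 /andP[q0 q1].
case: (parityP K) => m ->; last by rewrite !maj_acc_odd le_binom_tail.
have mix r : maj_acc m.*2 q r = (1 - q) * binom_tail m.*2 m.+1 r + q * binom_tail m.*2 m r.
  by rewrite maj_acc_even (binom_tail_split _ m); ring.
by rewrite !mix; apply: lerD; rewrite ler_wpM2l ?subr_ge0 ?le_binom_tail.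
Qed.

Lemma maj_acc_le_precision K q q' p : 0 <= p <= 1 -> q <= q' ->
  maj_acc K q p <= maj_acc K q' p.
Proof.
move=> p01 qq'; rewrite /maj_acc lerD2l.
by case: ifP => // _; rewrite ler_wpM2r ?binom_prob_ge0.
Qed.

Lemma maj_acc_continuous K q : continuous (maj_acc K q).
Proof.
move=> p; apply: cvgD; first exact: binom_tail_continuous.
case: ifP => _; last exact: cvg_cst.
by apply: cvgMl_tmp; exact: binom_prob_continuous.
Qed.

Lemma maj_acc_lt_oddS K q p : odd K -> 0 < p < 1 -> 1 / 2 < q ->
  maj_acc K q p < maj_acc K.+1 q p.
Proof.
case: (parityP K) => // m -> _ p01 q12.
have b0 : 0 < binom_prob m.*2.+1 m p by apply: binom_prob_gt0 => //; rewrite -addnn; lia.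
by rewrite maj_acc_doubleS ltrDl; apply: mulr_gt0 => //; apply: mulr_gt0; lra.
Qed.

Lemma maj_acc_lt_oddP K q p : odd K -> 0 < p < 1 -> p < q ->
  maj_acc K q p < maj_acc K.-1 q p.
Proof.
case: (parityP K) => // m -> _ p01 pq.
have b0 : 0 < binom_prob m.*2 m p by apply: binom_prob_gt0 => //; rewrite -addnn; lia.
by rewrite /= maj_acc_double ltrDl mulr_gt0 ?subr_gt0.
Qed.

Lemma maj_acc_lt_subn2 K q p : (4 <= K)%N -> 0 < p < 1 / 2 -> 1 / 2 <= q ->
  maj_acc K q p < maj_acc (K - 2) q p.
Proof.
case: K => [|[|K]] // K4 p012 q12; rewrite subSS subSS subn0.
have p01 : 0 < p < 1 by lra.
have b0 m : 0 < binom_prob m.*2.+1 m p by apply: binom_prob_gt0 => //; rewrite -addnn; lia.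
have drift m : 0 < (1 - 2 * p) * p * binom_prob m.*2.+1 m p.
  by apply: mulr_gt0 => //; apply: mulr_gt0; lra.
case: (parityP K) K4 => [[|m]|m] -> // _; last first.
  by rewrite maj_acc_oddS ltrBlDr ltrDl.
have decr : (2 * q - 1) * p * binom_prob m.*2.+3 m.+1 p
              <= (2 * q - 1) * p * binom_prob m.*2.+1 m p.
  rewrite ler_wpM2l ?binom_prob_center_decr //; first by apply: mulr_ge0; lra.
  by apply/andP; split; lra.
rewrite (maj_acc_doubleS m.+1) doubleS maj_acc_oddS maj_acc_doubleS.
by have := drift m; lra.
Qed.

End BinomialTail.

Local Open Scope classical_set_scope.

Section CriticalSet.
Variable R : realType.
Implicit Types f : R -> R -> R.

Definition crit_set f : set R :=
  [set lam | 0 <= lam <= 1 /\ exists x, 0 <= x <= 1 / 2 /\ f lam x = x].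

Lemma crit_set_closed f : continuous (fun z : R * R => f z.1 z.2) -> closed (crit_set f).
Proof.
move=> fc.
pose Z := (`[0, 1] `*` `[0, 1 / 2]) `&` ((fun z : R * R => f z.1 z.2 - z.2) @^-1` [set 0]).
have cZ : compact Z.
  apply: compact_closedI; first by apply: compact_setX; exact: segment_compact.
  apply: preimage_closed; last exact: closed_eq.
  by move=> z _; apply: continuousB; [exact: fc|exact: cvg_snd].
have -> : crit_set f = fst @` Z.
  apply/seteqP; split=> [l [l01 [x [x01 e]]]|_ [[l x] [[/= l01 x01] /= /subr0_eq e] <-]].
    by exists (l, x) => //; split; [split; rewrite /= in_itv|rewrite /= e subrr].
  rewrite in_itv /= in l01; rewrite in_itv /= in x01.
  by split=> //; exists x.
apply: compact_closed; first exact: Rhausdorff.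
by apply: continuous_compact => //; apply: continuous_subspaceT => z; exact: cvg_fst.
Qed.

Lemma crit_set_lbound f : has_lbound (crit_set f).
Proof. by exists 0 => l [/andP[]]. Qed.

Lemma closed_inf_mem (A : set R) : closed A -> A !=set0 -> has_lbound A -> A (inf A).
Proof.
move=> cA A0 lbA; apply: (itv_closed_infimums A0 cA).
by split; [exact: ge_inf|move=> y; exact: lb_le_inf A0].
Qed.

Lemma crit_set_ivt f l x : 0 <= l <= 1 -> 0 <= x <= 1 / 2 ->
  continuous (f l) -> f l x <= x -> 1 / 2 <= f l (1 / 2) -> crit_set f l.
Proof.
move=> l01 /andP[x0 x12] fc fx fh.
have fc' : {within `[x, 1 / 2], continuous (fun y => f l y - y)}.
  by apply: continuous_subspaceT => y; apply: continuousB; [exact: fc|exact: cvg_id].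
have [|c c_in /eqP] := IVT x12 fc' (v := 0).
  by rewrite ge_min le_max; apply/andP; split; apply/orP; [left|right]; lra.
rewrite subr_eq0 => /eqP e; split=> //; exists c; split=> //.
by move: c_in; rewrite in_itv /= => /andP[? ?]; apply/andP; split; lra.
Qed.

Lemma continuous2_snd {T U V : topologicalType} (f : T -> U -> V) t :
  continuous (fun z : T * U => f z.1 z.2) -> continuous (f t).
Proof.
by move=> fc u; apply: continuous2_cvg; [exact: (@fc (t, u))|exact: cvg_cst|exact: cvg_id].
Qed.

Lemma continuous2_fst {T U V : topologicalType} (f : T -> U -> V) u :
  continuous (fun z : T * U => f z.1 z.2) -> continuous (f^~ u).
Proof.
by move=> fc t; apply: continuous2_cvg; [exact: (@fc (t, u))|exact: cvg_id|exact: cvg_cst].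
Qed.

Section Comparison.
Variables F G : R -> R -> R.
Hypothesis F_continuous : continuous (fun z : R * R => F z.1 z.2).
Hypothesis G_continuous : continuous (fun z : R * R => G z.1 z.2).
Hypothesis F_half : forall l, 0 <= l <= 1 -> 1 / 2 <= F l (1 / 2).
Hypothesis G_no_fixed0 : forall x, 0 <= x <= 1 / 2 -> G 0 x != x.
Hypothesis F_below_at_G_fixed : forall l x, 0 <= l <= 1 -> 0 <= x <= 1 / 2 ->
  G l x = x -> F l x < x.

Lemma crit_set_subset : crit_set G `<=` crit_set F.
Proof.
move=> l [l01 [x [x01 e]]].
apply: (crit_set_ivt l01 x01 (continuous2_snd (t := l) F_continuous)); last exact: F_half.
exact/ltW/F_below_at_G_fixed.
Qed.

Lemma crit_set_lt_inf : crit_set G !=set0 ->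
  exists2 l, crit_set F l & l < inf (crit_set G).
Proof.
move=> G0.
have [L01 [x [x01 e]]] :=
  closed_inf_mem (crit_set_closed G_continuous) G0 (crit_set_lbound G).
set L := inf (crit_set G) in L01 e *; have /andP[L0 L1] := L01.
have Lpos : 0 < L.
  rewrite lt_neqAle L0 andbT; apply/eqP => L0'.
  by move: (G_no_fixed0 x01); rewrite L0' e eqxx.
have /nbhs_ballP[eps eps0 near_L] : \forall l \near L, F l x < x.
  exact: cvgr_lt (@continuous2_fst _ _ _ F x F_continuous L) _ (F_below_at_G_fixed L01 x01 e).
pose l := L - minr eps L / 2.
have [m_eps m_L m_pos] :
    [/\ minr eps L <= eps, minr eps L <= L & 0 < minr eps L].
  by rewrite !ge_min !lexx ?orbT lt_min eps0 Lpos.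
have Flx : F l x < x.
  by apply: near_L; rewrite /ball /= /l opprB addrC subrK ger0_norm; lra.
exists l; last by rewrite /l; lra.
apply: (crit_set_ivt _ x01 (continuous2_snd (t := l) F_continuous)); [|exact: ltW|apply: F_half];
  by apply/andP; split; rewrite /l; lra.
Qed.

Lemma ereal_inf_crit_set_le_lt :
  (ereal_inf (EFin @` crit_set F) <= ereal_inf (EFin @` crit_set G))%E /\
  (ereal_inf (EFin @` crit_set F) \is a fin_num ->
     (ereal_inf (EFin @` crit_set F) < ereal_inf (EFin @` crit_set G))%E).
Proof.
split=> [|fin]; first exact/ereal_inf_le_tmp/image_subset/crit_set_subset.
have [G0|G0] := pselect (crit_set G !=set0); last first.
  rewrite (_ : crit_set G = set0) ?image_set0 ?ereal_inf0; last first.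
    by apply/seteqP; split=> // l Gl; apply: G0; exists l.
  by move/fin_numPlt: fin => /andP[].
have [l Fl lt_l] := crit_set_lt_inf G0.
rewrite (ereal_inf_EFin (crit_set_lbound G) G0); apply: (le_lt_trans (y := l%:E)).
  by apply: ereal_inf_lbound; exists l.
by rewrite lte_fin.
Qed.

End Comparison.
End CriticalSet.

Section MajorityRule.
Variable R : realType.
Implicit Types q p : R.

Definition inflow q K C p := (q + C%:R * maj_acc K q p) / (1 + C%:R).

Lemma lambda_starE q K C :
  lambda_star q K C = ereal_inf (EFin @` crit_set (phi_maj q K C)).
Proof. by []. Qed.

Lemma phi_majE q K C lam x :
  phi_maj q K C lam x = inflow q K C (lam * x + (1 - lam) * q).
Proof.
have maj_tail p : \sum_(k < K.+1 | (K < 2 * k)%N) binom_prob K k p = binom_tail K K./2.+1 p.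
  by rewrite /binom_tail big_geq_mkord; apply: eq_bigl => k; rewrite mul2n -ltn_half_double.
rewrite /phi_maj /inflow /maj_acc /Pk maj_tail.
by case: (~~ odd K); rewrite ?addr0 ?mulr0; congr (_ / _); ring.
Qed.

Lemma inflow_continuous q K C : continuous (inflow q K C).
Proof.
move=> p; apply: cvgMr_tmp; apply: cvgD; first exact: cvg_cst.
by apply: cvgMl_tmp; exact: maj_acc_continuous.
Qed.

Lemma phi_maj_continuous q K C : continuous (fun z : R * R => phi_maj q K C z.1 z.2).
Proof.
have -> : (fun z : R * R => phi_maj q K C z.1 z.2) =
          inflow q K C \o (fun z : R * R => z.1 * z.2 + (1 - z.1) * q).
  by apply: funext => z; rewrite phi_majE.
move=> z; apply: continuous_comp; last exact: inflow_continuous.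
apply: cvgD; first by apply: cvgM; [exact: cvg_fst|exact: cvg_snd].
by apply: cvgM; [apply: cvgB; [exact: cvg_cst|exact: cvg_fst]|exact: cvg_cst].
Qed.

Lemma inflow_gt_half q K C p : admissible q K C -> 1 / 2 <= p <= 1 ->
  1 / 2 < inflow q K C p.
Proof.
case=> /andP[q12 q1] [C1 _] /andP[p12 p1].
have M12 : 1 / 2 <= maj_acc K q p.
  apply: le_trans (maj_acc_half K (ltW q12)) _.
  by apply: le_maj_acc => //; apply/andP; split; lra.
have C0 : 1 <= C%:R :> R by rewrite ler1n.
by rewrite /inflow ltr_pdivlMr; [nra|lra].
Qed.

Lemma phi_maj_fixed_mix q K C l x : admissible q K C -> 0 <= l <= 1 -> 0 <= x <= 1 / 2 ->
  phi_maj q K C l x = x -> 0 < l * x + (1 - l) * q < 1 / 2.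
Proof.
move=> adm /andP[l0 l1] /andP[x0 x12]; rewrite phi_majE.
have [/andP[q12 q1] [C1 _]] := adm.
set p := l * x + (1 - l) * q => e.
have p01 : 0 <= p <= 1 by apply/andP; split; rewrite /p; nra.
have p12 : p < 1 / 2.
  rewrite ltNge; apply/negP => p12; have /andP[_ p1] := p01.
  by have := inflow_gt_half adm (introT andP (conj p12 p1)); lra.
have xpos : 0 < x.
  rewrite -e /inflow divr_gt0 ?ltr_pwDl ?mulr_ge0 ?maj_acc_ge0 //; lra.
by apply/andP; split => //; rewrite /p; nra.
Qed.

Lemma lambda_star_le_lt q K C q' K' C' : admissible q K C -> admissible q' K' C' ->
  (forall l x, 0 <= l <= 1 -> 0 <= x <= 1 / 2 ->
     phi_maj q' K' C' l x = x -> phi_maj q K C l x < x) ->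
  (lambda_star q K C <= lambda_star q' K' C')%E /\
  (lambda_star q K C \is a fin_num -> (lambda_star q K C < lambda_star q' K' C')%E).
Proof.
move=> adm adm' below; rewrite !lambda_starE; apply: ereal_inf_crit_set_le_lt => //.
- exact: phi_maj_continuous.
- exact: phi_maj_continuous.
- move=> l /andP[l0 l1]; rewrite phi_majE; apply/ltW/inflow_gt_half => //.
  by case: adm => /andP[q12 q1] _; apply/andP; split; nra.
- move=> x /andP[_ x12]; rewrite phi_majE mul0r subr0 mul1r add0r.
  apply/negbT/gt_eqF/(le_lt_trans x12)/inflow_gt_half => //.
  by case: adm' => /andP[q12 q1] _; apply/andP; split; lra.
Qed.

Lemma lambda_star_precision q q' K C : admissible q K C -> admissible q' K C -> q < q' ->
  (lambda_star q K C <= lambda_star q' K C)%E /\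
  (lambda_star q K C \is a fin_num -> (lambda_star q K C < lambda_star q' K C)%E).
Proof.
move=> adm adm' qq'; apply: lambda_star_le_lt => // l x /andP[l0 l1] /andP[x0 x12] e.
rewrite -[X in _ < X]e !phi_majE /inflow.
have [/andP[q12 q1] [C1 _]] := adm; have [/andP[_ q'1] _] := adm'.
have C0 : 0 < 1 + C%:R :> R by rewrite ltr_pwDl ?ler0n.
rewrite ltr_pM2r ?invr_gt0 // ltr_leD // ler_wpM2l //.
apply: le_trans (maj_acc_le_precision K _ (ltW qq')); last by apply/andP; split; nra.
apply: le_maj_acc; [nra| |nra|apply/andP; split; lra].
by rewrite lerD2l ler_wpM2l ?subr_ge0 ?(ltW qq').
Qed.

Lemma lambda_star_capacity q K C C' : admissible q K C -> admissible q K C' -> (C' < C)%N ->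
  (lambda_star q K C <= lambda_star q K C')%E /\
  (lambda_star q K C \is a fin_num -> (lambda_star q K C < lambda_star q K C')%E).
Proof.
move=> adm adm' CC'; apply: lambda_star_le_lt => // l x _ /andP[x0 x12].
rewrite !phi_majE /inflow; set M := maj_acc K q _.
have [/andP[q12 _] _] := adm; have [_ [C'1 _]] := adm'.
have C'_ge1 : 1 <= C'%:R :> R by rewrite ler1n.
have lt_CC' : C'%:R < C%:R :> R by rewrite ltr_nat.
have C'0 : 1 + C'%:R != 0 :> R by rewrite gt_eqF //; lra.
move=> e; have {}e : q + C'%:R * M = x * (1 + C'%:R) by rewrite -e divfK.
rewrite ltr_pdivrMr; last lra.
have Mx : M < x by nra.
have : 0 < (C%:R - C'%:R) * (x - M) by apply: mulr_gt0; lra.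
lra.
Qed.

Lemma lambda_star_maj q K K' C : admissible q K C -> admissible q K' C ->
  (forall p, 0 < p < 1 / 2 -> maj_acc K q p < maj_acc K' q p) ->
  (lambda_star q K C <= lambda_star q K' C)%E /\
  (lambda_star q K C \is a fin_num -> (lambda_star q K C < lambda_star q K' C)%E).
Proof.
move=> adm adm' ltM; apply: lambda_star_le_lt => // l x l01 x01 e.
have /ltM M_lt := phi_maj_fixed_mix adm' l01 x01 e.
rewrite -[X in _ < X]e !phi_majE /inflow.
have [_ [C1 _]] := adm.
have C0 : 0 < 1 + C%:R :> R by rewrite ltr_pwDl ?ler0n.
by rewrite ltr_pM2r ?invr_gt0 // ltrD2l ltr_pM2l // ltr0n.
Qed.

End MajorityRule.

Theorem proposition4 (R : realType) :
  (* (i) *)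
  (forall (q q' : R) (K C : nat),
      admissible q K C -> admissible q' K C -> q < q' ->
      (lambda_star q K C <= lambda_star q' K C)%E /\
      (lambda_star q K C \is a fin_num ->
         (lambda_star q K C < lambda_star q' K C)%E)) /\
  (* (ii) *)
  (forall (q : R) (K C C' : nat),
      admissible q K C -> admissible q K C' -> (C' < C)%N ->
      (lambda_star q K C <= lambda_star q K C')%E /\
      (lambda_star q K C \is a fin_num ->
         (lambda_star q K C < lambda_star q K C')%E)) /\
  (* (iii) *)
  (forall (q : R) (K C : nat),
      admissible q K C -> admissible q (K - 2) C ->
      (lambda_star q K C <= lambda_star q (K - 2) C)%E /\
      (lambda_star q K C \is a fin_num ->
         (lambda_star q K C < lambda_star q (K - 2) C)%E)) /\
  (* (iv) *)
  (forall (q : R) (K C : nat),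
      admissible q K C -> admissible q K.+1 C -> odd K ->
      (lambda_star q K C <= lambda_star q K.+1 C)%E /\
      (lambda_star q K C \is a fin_num ->
         (lambda_star q K C < lambda_star q K.+1 C)%E)) /\
  (* (v) *)
  (forall (q : R) (K C : nat),
      admissible q K C -> admissible q K.-1 C -> odd K ->
      (lambda_star q K C <= lambda_star q K.-1 C)%E /\
      (lambda_star q K C \is a fin_num ->
         (lambda_star q K C < lambda_star q K.-1 C)%E)).
Proof.
split; first exact: lambda_star_precision.
split; first exact: lambda_star_capacity.
split.
  move=> q K C adm adm2; apply: lambda_star_maj => // p p012.
  have [/andP[q12 _] [C1 CK]] := adm2.
  by apply: maj_acc_lt_subn2 => //; [lia|lra].
split=> q K C adm adm' oddK; apply: lambda_star_maj => // p p012;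
  have [/andP[q12 _] _] := adm.
- by apply: maj_acc_lt_oddS => //; lra.
- by apply: maj_acc_lt_oddP => //; lra.
Qed.
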